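(* Let $u=s_{i_1}\cdots s_{i_l}$ and $v=s_{j_1}\cdots s_{j_m}$ ($m\ge1$) be reduced words for glides in $\hat S_n$, $v$ of offset $k_2$, such that $vu$ is reduced, and let $\alpha_1,\dots,\alpha_n\in\mathbb R$ satisfy $\alpha_i<\alpha_j$ whenever $i\triangleleft j$ in the wiring diagram of $v|u$. Let $\tilde v=\rho^{-k_2}(v)$ with reduced word $s_{j_1-k_2}\cdots s_{j_m-k_2}$. Let $b>c$ be real numbers in the same connected component of $\mathbb R\setminus\{\alpha_1,\dots,\alpha_n\}$ with $f(b)=f(c)$, where $f(t)=\prod_{j=1}^n(t-\alpha_j)$, and put $B_j=\frac{b-\alpha_j}{c-\alpha_j}$. If $(t'_1,\dots,t'_n)$ is a representative of $t(\tilde v)$, then $$t'_1\log B_1+\dots+t'_n\log B_n<0.$$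
   Context: $\hat S_n$: generators $s_0,\dots,s_{n-1}$ (indices mod $n$), relations $s_i^2=1$, $s_is_js_i=s_js_is_j$ if $i-j\equiv\pm1$, $s_is_j=s_js_i$ if $i-j\not\equiv0,\pm1$; $\rho$ is the automorphism $s_i\mapsto s_{i+1}$. $\phi:\hat S_n\to S_n$, $s_i\mapsto(i\ i+1)$, $s_0\mapsto(1\ n)$; a glide of offset $k$ is $g$ with $\phi(g)(j)\equiv j+k\pmod n$. Wiring diagram: letters drawn left to right on a cylinder with wires in positions $1,\dots,n$ (mod $n$), $s_i$ a crossing of positions $i,i+1$ ($s_0$: $n$ and $1$); the upper wire of $s_i$ passes from position $i+1$ to $i$ (for $s_0$ from $1$ to $n$). In the diagram of $v|u$, wire $i$ is the wire in position $i$ at the cut between $v$ and $u$, and $i\triangleleft j$ means wires $i,j$ cross with $j$ the upper wire. Trajectory of a glide $g$ with a reduced word: lift the diagram of $|g$ to the universal cover (integer positions, wires labelled by starting position); a chamber with set $S$ of underlying wire labels has label $(\mathbf s_i)$, $\mathbf s_i=\lceil\max\{b\in S:b\equiv i\bmod n\}/n\rceil$; $t(g)\in\mathbb Z^n/\mathbb Z(1,\dots,1)$ is the label of the chamber directly above wire $1$ at the right end minus that at the left end. *)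

From HB Require Import structures.
From mathcomp Require Import all_boot all_order all_algebra.
From mathcomp Require Import reals exp.

Set Implicit Arguments.
Unset Strict Implicit.
Unset Printing Implicit Defensive.

Import Order.TTheory GRing.Theory Num.Theory.
Local Open Scope ring_scope.

(* A word s_{i_1} ... s_{i_l} in the generators of \hat S_n is the list
   [:: i_1; ...; i_l] of natural numbers < n (read left to right). *)
Definition is_word (n : nat) (w : seq nat) : bool := all (fun i => (i < n)%N) w.

Definition adjn (n i j : nat) : bool :=
  (i.+1 %% n == j %% n)%N || (j.+1 %% n == i %% n)%N.

(* The congruence on words generated by the defining relations of \hat S_n:
   two words represent the same element of \hat S_n iff they are related. *)
Inductive wequiv (n : nat) : seq nat -> seq nat -> Prop :=
| weq_refl w : wequiv n w w
| weq_sym w1 w2 : wequiv n w1 w2 -> wequiv n w2 w1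
| weq_trans w1 w2 w3 : wequiv n w1 w2 -> wequiv n w2 w3 -> wequiv n w1 w3
| weq_ctx a b x y : wequiv n x y -> wequiv n (a ++ x ++ b) (a ++ y ++ b)
| weq_sq i : (i < n)%N -> wequiv n [:: i; i] [::]
| weq_braid i j : (i < n)%N -> (j < n)%N -> adjn n i j ->
    wequiv n [:: i; j; i] [:: j; i; j]
| weq_comm i j : (i < n)%N -> (j < n)%N -> i != j -> ~~ adjn n i j ->
    wequiv n [:: i; j] [:: j; i].

Definition reduced (n : nat) (w : seq nat) : Prop :=
  is_word n w /\
  forall w', is_word n w' -> wequiv n w w' -> (size w <= size w')%N.

(* The transposition phi(s_i) = (i i+1) (phi(s_0) = (1 n)), acting on
   positions, here written on integer representatives of positions mod n.
   On the universal cover it is also the swap of positions p, p+1, p = i mod n. *)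
Definition tau (n i : nat) (x : int) : int :=
  if (x %% n)%Z == i%:Z then x + 1
  else if ((x - 1) %% n)%Z == i%:Z then x - 1 else x.

Definition phi (n : nat) (g : seq nat) (x : int) : int := foldr (tau n) x g.

Definition glide (n : nat) (g : seq nat) (k : int) : Prop :=
  forall j : nat, (1 <= j <= n)%N -> (phi n g j %% n)%Z = ((j%:Z + k) %% n)%Z.

Definition rho_shift (n : nat) (k : int) (v : seq nat) : seq nat :=
  map (fun j => `|((j%:Z - k) %% n)%Z|%N) v.

(* Lifted wiring diagram (universal cover): a state maps each integer
   position to the label of the wire occupying it.  Letter s_i swaps the
   contents of positions p and p+1 for every p = i (mod n). *)
Definition step (n i : nat) (st : int -> int) : int -> int :=
  fun p => st (tau n i p).

Definition lstate (n : nat) (w : seq nat) : int -> int :=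
  foldl (fun st i => step n i st) (fun p => p) w.

(* the wire on the cylinder (numbered 1..n) underlying a lifted wire label *)
Definition cyl (n : nat) (a : int) : nat := (`|((a - 1) %% n)%Z|%N).+1.

(* Crossings in the diagram of v|u, wires labelled by their position at the
   cut.  (i, j) : wire i is the lower wire and wire j the upper wire.
   In the u-part (right of the cut) we run u forward from the cut; the state
   before a letter s_i has the upper wire at p+1 and the lower one at p. *)
Definition cross_right (n : nat) (u : seq nat) (i j : nat) : Prop :=
  exists k : nat, (k < size u)%N /\
    exists p : int, (p %% n)%Z = (nth 0%N u k)%:Z /\
      cyl n (lstate n (take k u) p) = i /\
      cyl n (lstate n (take k u) (p + 1)) = j.

(* In the v-part (left of the cut) we run v backwards from the cut; the state
   just right of a letter s_i has the upper wire at p and the lower at p+1. *)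
Definition cross_left (n : nat) (v : seq nat) (i j : nat) : Prop :=
  exists k : nat, (k < size v)%N /\
    exists p : int, (p %% n)%Z = (nth 0%N (rev v) k)%:Z /\
      cyl n (lstate n (take k (rev v)) (p + 1)) = i /\
      cyl n (lstate n (take k (rev v)) p) = j.

Definition tri (n : nat) (v u : seq nat) (i j : nat) : Prop :=
  cross_left n v i j \/ cross_right n u i j.

Definition ceil_div (n : nat) (b : int) : int := - ((- b) %/ n%:Z)%Z.

(* lab is the label of the chamber lying just above position q (between
   positions q and q+1) in the lifted state st: the underlying wire labels
   are S = { st x | x <= q } and lab_i = ceil(max{b in S | b = i mod n} / n). *)
Definition chamber_label (n : nat) (st : int -> int) (q : int)
    (lab : nat -> int) : Prop :=
  forall i : nat, (1 <= i <= n)%N -> exists b : int,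
    (exists x : int, x <= q /\ st x = b) /\
    (b %% n)%Z = (i%:Z %% n)%Z /\
    (forall x : int, x <= q -> (st x %% n)%Z = (i%:Z %% n)%Z -> st x <= b) /\
    lab i = ceil_div n b.

Definition above_wire1 (n : nat) (st : int -> int) (lab : nat -> int) : Prop :=
  exists q : int, st q = 1 /\ chamber_label n st q lab.

(* t is a representative of the trajectory t(g) in Z^n / Z(1,...,1), computed
   from the reduced word g: right-end label minus left-end label. *)
Definition traj_rep (n : nat) (g : seq nat) (t : nat -> int) : Prop :=
  exists L R : nat -> int,
    above_wire1 n (fun p => p) L /\ above_wire1 n (lstate n g) R /\
    exists c : int, forall i : nat, (1 <= i <= n)%N -> t i = R i - L i + c.

From HB Require Import structures.
From mathcomp Require Import all_boot all_order all_algebra.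
From mathcomp Require Import reals exp.
From mathcomp Require Import zify ring lra.

(* Write phi(v) y = y + k2 + w(y) * n; the winding numbers w(1), ..., w(n)
   are, up to an additive constant, the trajectory of rho^(-k2)(v).  If
   w(j) < w(i), the wires at cut positions i and j end up in the opposite
   order, so they cross in the v-part of the diagram and alpha_j < alpha_i:
   w is weakly increasing along alpha.  It is not constant: otherwise phi(v)
   would be a translation, and the two wires swapped by the last letter of v
   would have to cross back, forcing both orders of their alphas.
   Finally x_i = log B_i sums to 0 because f(b) = f(c), and x_i > 0 exactly
   when alpha_i < c, x_i < 0 exactly when alpha_i > b.  Choosing a threshold
   theta between the w(i) with x_i > 0 and those with x_i < 0,
   sum w(i) x_i = sum (w(i) - theta) x_i, a sum of nonpositive terms that
   are not all zero. *)

Set Implicit Arguments.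
Unset Strict Implicit.
Unset Printing Implicit Defensive.

Import Order.TTheory GRing.Theory Num.Theory.
Local Open Scope ring_scope.

Section Cylinder.
Variable n : nat.

Lemma eqz_modP (x y : int) : (x = y %[mod n])%Z <-> exists e, x = y + e * n%:Z.
Proof.
split=> [/eqP | [e ->]]; last by rewrite addrC modzMDl.
rewrite eqz_mod_dvd => /dvdzP [e He]; exists e.
by rewrite -He addrC subrK.
Qed.

Lemma modz_addMn (x e : int) : ((x + e * n%:Z) %% n)%Z = (x %% n)%Z.
Proof. by rewrite addrC modzMDl. Qed.

Lemma int_decomp (y : int) : (0 < n)%N ->
  exists2 j : nat, (1 <= j <= n)%N & exists e, y = j%:Z + e * n%:Z.
Proof.
move=> n_gt0; have n_neq0 : n%:Z != 0 by lia.
have r_ge0 := modz_ge0 (y - 1) n_neq0.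
have r_lt := ltz_pmod (y - 1) (ltac:(lia) : 0 < n%:Z).
have y_eq := divz_eq (y - 1) n.
exists `|((y - 1) %% n)%Z|.+1; first by lia.
by exists ((y - 1) %/ n)%Z; lia.
Qed.

Lemma ceil_divMDr (z e : int) : (0 < n)%N ->
  ceil_div n (z + e * n%:Z) = ceil_div n z + e.
Proof.
move=> n_gt0; rewrite /ceil_div opprD -mulNr addrC divzMDl; first by ring.
by lia.
Qed.

Lemma ceil_div_small (z : int) : - n%:Z < z <= 0 -> ceil_div n z = 0.
Proof. by move=> hz; rewrite /ceil_div divz_small ?oppr0 // absz_nat; lia. Qed.

Lemma cyl_nat (i : nat) : (1 <= i <= n)%N -> cyl n i%:Z = i.
Proof.
move=> hi; rewrite /cyl (_ : i%:Z - 1 = i.-1%:Z) ?modz_small; lia.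
Qed.

Lemma cyl_addn (x : int) : cyl n (x + n%:Z) = cyl n x.
Proof. by rewrite /cyl addrAC modzDr. Qed.

Variant tau_spec (i : nat) (x : int) : int -> Prop :=
| TauUp of (x %% n)%Z = i%:Z : tau_spec i x (x + 1)
| TauDown of (x %% n)%Z <> i%:Z & ((x - 1) %% n)%Z = i%:Z : tau_spec i x (x - 1)
| TauFix of (x %% n)%Z <> i%:Z & ((x - 1) %% n)%Z <> i%:Z : tau_spec i x x.

Lemma tauP i (x : int) : tau_spec i x (tau n i x).
Proof.
rewrite /tau; case: eqP => [|h1]; first exact: TauUp.
by case: eqP => h2; [exact: TauDown | exact: TauFix].
Qed.

Lemma tau_addMn i (x e : int) : tau n i (x + e * n%:Z) = tau n i x + e * n%:Z.
Proof.
have x1E : x + e * n%:Z - 1 = x - 1 + e * n%:Z by ring.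
rewrite /tau (modz_addMn x e) x1E (modz_addMn (x - 1) e).
by case: ifP => _; [|case: ifP => _]; ring.
Qed.

Lemma tau_inversion i (x y : int) : x < y -> tau n i y < tau n i x ->
  (x %% n)%Z = i%:Z /\ y = x + 1.
Proof.
by case: (tauP i x); case: (tauP i y) => *; lia.
Qed.

Lemma tau_shift (j : nat) (k x : int) : (0 < n)%N -> (j < n)%N ->
  tau n `|((j%:Z - k) %% n)%Z|%N x = tau n j (x + k) - k.
Proof.
move=> n_gt0 lt_jn; have jE : (j%:Z %% n)%Z = j by rewrite modz_small; lia.
have modE (y : int) : ((y %% n)%Z == ((j%:Z - k) %% n)%Z) = (((y + k) %% n)%Z == j%:Z).
  by rewrite -(eqz_modDr k) subrK jE.
rewrite /tau gez0_abs; last by apply: modz_ge0; lia.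
by rewrite !modE addrAC; case: ifP => _; [|case: ifP => _]; ring.
Qed.

Lemma phi_rcons w i x : phi n (rcons w i) x = phi n w (tau n i x).
Proof. by rewrite /phi foldr_rcons. Qed.

Lemma phi_addMn w (x e : int) : phi n w (x + e * n%:Z) = phi n w x + e * n%:Z.
Proof. by elim: w => //= i w ->; rewrite tau_addMn. Qed.

Lemma lstateE w : lstate n w =1 phi n w.
Proof.
elim/last_ind: w => // w i IH x.
by rewrite /lstate foldl_rcons -/(lstate n w) /step IH phi_rcons.
Qed.

Lemma phi_rho_shift k v (x : int) : (0 < n)%N -> is_word n v ->
  phi n (rho_shift n k v) x = phi n v (x + k) - k.
Proof.
move=> n_gt0; elim: v => /= [|j v IH /andP [lt_jn /IH ->]]; first by rewrite addrK.
by rewrite tau_shift // subrK.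
Qed.

Hypothesis n_gt1 : (1 < n)%N.

Lemma modz_add1_neq (x : int) : ((x + 1) %% n)%Z <> (x %% n)%Z.
Proof.
move/eqz_modP=> [e He]; have [] : e <= 0 \/ 1 <= e by lia.
all: nia.
Qed.

Lemma tauK i : involutive (tau n i).
Proof.
move=> x; case: (tauP i x) => [xi | xi x1i | xi x1i].
- case: (tauP i (x + 1)) => [x1i | _ | _ x1i]; last by case: x1i; rewrite addrK.
    by case: (modz_add1_neq (x := x)); rewrite x1i xi.
  by rewrite addrK.
- by case: (tauP i (x - 1)) => [_ | x1i' | x1i' _]; rewrite ?subrK //; case: x1i'.
- by case: (tauP i x).
Qed.

Lemma phi_revK w : cancel (phi n (rev w)) (phi n w).
Proof.
elim: w => // i w IH x.
by rewrite rev_cons phi_rcons /= IH tauK.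
Qed.

End Cylinder.

Definition winding (n : nat) (v : seq nat) (k y : int) : int :=
  ((phi n v y - y - k) %/ n)%Z.

Section Glides.
Variables (n : nat) (v : seq nat) (k : int).

Lemma winding_addMn (y e : int) : winding n v k (y + e * n%:Z) = winding n v k y.
Proof. by rewrite /winding phi_addMn; congr (_ %/ _)%Z; ring. Qed.

Hypotheses (n_gt0 : (0 < n)%N) (v_glide : glide n v k).

Lemma glide_dvdz (y : int) : (n %| phi n v y - y - k)%Z.
Proof.
have [j /v_glide /eqP + [e ->]] := int_decomp y n_gt0.
rewrite eqz_mod_dvd phi_addMn.
by congr (dvdz _ _); ring.
Qed.

Lemma phi_glide (y : int) : phi n v y = y + k + winding n v k y * n%:Z.
Proof. by rewrite /winding divzK ?glide_dvdz //; ring. Qed.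

End Glides.

Lemma flip_step (P : pred nat) (m0 m : nat) : (m0 <= m)%N -> P m0 -> ~~ P m ->
  exists2 k, (m0 <= k < m)%N & P k && ~~ P k.+1.
Proof.
elim: m => [|m IH] le_m0m Pm0 nPm.
  by move: Pm0; rewrite (_ : m0 = 0%N) ?(negbTE nPm); lia.
have [le_m0m' | lt_mm0] := leqP m0 m; last first.
  by move: Pm0; rewrite (_ : m0 = m.+1) ?(negbTE nPm); lia.
case Pm: (P m); first by exists m; rewrite ?Pm ?nPm //; lia.
by have [j /andP [? ?] ?] := IH le_m0m' Pm0 (negbT Pm); exists j => //; lia.
Qed.

(* The position, [m] letters to the left of the cut, of the wire that is at
   position [A] at the cut. *)
Definition wire_pos (n : nat) (v : seq nat) (m : nat) (A : int) : int :=
  phi n (rev (take m (rev v))) A.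

Section Crossings.
Variables (n : nat) (v : seq nat).
Hypothesis n_gt1 : (1 < n)%N.

Lemma wire_pos0 (A : int) : wire_pos n v 0 A = A.
Proof. by rewrite /wire_pos take0. Qed.

Lemma wire_posS (m : nat) (A : int) : (m < size v)%N ->
  wire_pos n v m.+1 A = tau n (nth 0%N (rev v) m) (wire_pos n v m A).
Proof.
by move=> lt_mv; rewrite /wire_pos (take_nth 0%N) ?size_rev // rev_rcons.
Qed.

Lemma wire_pos_size (A : int) : wire_pos n v (size v) A = phi n v A.
Proof. by rewrite /wire_pos -size_rev take_size revK. Qed.

Lemma lstate_wire_pos (m : nat) (A : int) :
  lstate n (take m (rev v)) (wire_pos n v m A) = A.
Proof. by rewrite lstateE phi_revK. Qed.

Lemma wire_pos_inj (m : nat) : injective (wire_pos n v m).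
Proof. by move=> A B eqAB; rewrite -(lstate_wire_pos m A) eqAB lstate_wire_pos. Qed.

Lemma cross_left_of_swap (m : nat) (A B : int) : (m < size v)%N ->
  wire_pos n v m A < wire_pos n v m B -> ~~ (wire_pos n v m.+1 A < wire_pos n v m.+1 B) ->
  cross_left n v (cyl n B) (cyl n A).
Proof.
move=> lt_mv lt_AB; have neq_AB : A != B by apply: contraTneq lt_AB => ->; rewrite ltxx.
rewrite -leNgt le_eqVlt (inj_eq (@wire_pos_inj _)) eq_sym (negbTE neq_AB) /=.
rewrite !wire_posS // => /(tau_inversion lt_AB) [Ai BE].
exists m; split=> //; exists (wire_pos n v m A); split=> //.
by rewrite -BE !lstate_wire_pos.
Qed.

Variables (R : realType) (alpha : nat -> R).
Hypothesis alpha_cross : forall i j, cross_left n v i j -> alpha i < alpha j.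

Lemma alpha_lt_of_inversion (A B : int) :
  A < B -> phi n v B < phi n v A -> alpha (cyl n B) < alpha (cyl n A).
Proof.
move=> lt_AB lt_phi; pose P m := wire_pos n v m A < wire_pos n v m B.
have P0 : P 0%N by rewrite /P !wire_pos0.
have nPv : ~~ P (size v) by rewrite /P !wire_pos_size -leNgt ltW.
have [m /andP [_ lt_mv] /andP [Pm nPm]] := flip_step (leq0n _) P0 nPv.
exact: alpha_cross (cross_left_of_swap lt_mv Pm nPm).
Qed.

Lemma last_letter_no_ascent (p : int) : (0 < size v)%N ->
  (p %% n)%Z = (nth 0%N (rev v) 0)%:Z -> ~ phi n v p < phi n v (p + 1).
Proof.
(* The last letter of [v] swaps the wires [p] and [p + 1]; if they end in
   their original order, they cross a second time in the opposite direction. *)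
move=> v_gt0 p_last lt_phi.
have tau_p : tau n (nth 0%N (rev v) 0) p = p + 1 by rewrite /tau p_last eqxx.
have pos1_p : wire_pos n v 1 p = p + 1 by rewrite wire_posS // wire_pos0.
have pos1_p1 : wire_pos n v 1 (p + 1) = p by rewrite wire_posS // wire_pos0 -tau_p tauK.
have first_cross : alpha (cyl n (p + 1)) < alpha (cyl n p).
  apply/alpha_cross/(@cross_left_of_swap 0) => //; rewrite ?wire_pos0 ?pos1_p ?pos1_p1; lia.
pose P m := wire_pos n v m (p + 1) < wire_pos n v m p.
have P1 : P 1%N by rewrite /P pos1_p pos1_p1; lia.
have nPv : ~~ P (size v) by rewrite /P !wire_pos_size -leNgt ltW.
have [m /andP [_ lt_mv] /andP [Pm nPm]] := flip_step v_gt0 P1 nPv.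
have := alpha_cross (cross_left_of_swap lt_mv Pm nPm).
by rewrite (lt_gtF first_cross).
Qed.

Variable k : int.
Hypothesis v_glide : glide n v k.

Lemma alpha_lt_of_winding_lt (i j : nat) : (1 <= i <= n)%N -> (1 <= j <= n)%N ->
  winding n v k j%:Z < winding n v k i%:Z -> alpha j < alpha i.
Proof.
have n_gt0 : (0 < n)%N by lia.
have inversion (A B : int) : A < B < A + n%:Z ->
    winding n v k B < winding n v k A -> alpha (cyl n B) < alpha (cyl n A).
  move=> AB lt_w; apply: alpha_lt_of_inversion; first by lia.
  by rewrite !(phi_glide n_gt0 v_glide); nia.
move=> hi hj lt_w; case: (ltngtP i j) => [lt_ij | lt_ji | eq_ij].
- by rewrite -(cyl_nat hi) -(cyl_nat hj); apply: inversion => //; lia.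
- rewrite -(cyl_nat hi) -(cyl_nat hj) -cyl_addn; apply: inversion; first by lia.
  by rewrite -[n%:Z]mul1r winding_addMn.
- by move: lt_w; rewrite eq_ij ltxx.
Qed.

Lemma winding_nonconst : is_word n v -> (0 < size v)%N ->
  ~ (forall i j : nat, (1 <= i <= n)%N -> (1 <= j <= n)%N ->
      winding n v k i%:Z = winding n v k j%:Z).
Proof.
move=> v_word v_gt0 w_const; have n_gt0 : (0 < n)%N by lia.
set i0 := nth 0%N (rev v) 0.
have lt_i0n : (i0 < n)%N by move/allP: v_word; apply; rewrite -mem_rev mem_nth ?size_rev.
have w_constZ (y : int) : winding n v k y = winding n v k 1.
  have [j hj [e ->]] := int_decomp y n_gt0.
  by rewrite winding_addMn (w_const j 1%N).
apply: (@last_letter_no_ascent i0%:Z v_gt0); first by rewrite modz_small; lia.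
by rewrite !(phi_glide n_gt0 v_glide) !w_constZ; lia.
Qed.

End Crossings.

Section Chambers.
Variable n : nat.
Hypothesis n_gt0 : (0 < n)%N.

Lemma ceil_div1 : ceil_div n 1 = 1.
Proof.
rewrite [X in ceil_div _ X](_ : _ = (1 - n%:Z) + 1 * n%:Z); last by ring.
by rewrite ceil_divMDr // ceil_div_small ?add0r //; lia.
Qed.

Variables (st : int -> int) (K : int) (g : int -> int).
Hypothesis stE : forall x, st x = x + K + g (x + K) * n%:Z.
Hypothesis g_addMn : forall y e, g (y + e * n%:Z) = g y.

Lemma chamber_label_window (q : int) (lab : nat -> int) (i : nat) (x : int) :
  chamber_label n st q lab -> (1 <= i <= n)%N -> q - n%:Z < x <= q ->
  ((x + K) %% n)%Z = (i%:Z %% n)%Z -> lab i = ceil_div n (st x).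
Proof.
move=> lab_q hi hx xi.
have [_ [[x0 [le_x0q <-]] [x0i [st_max ->]]]] := lab_q i hi.
have st_mod (y : int) : (st y %% n)%Z = ((y + K) %% n)%Z by rewrite stE modz_addMn.
have [e x0E] : exists e, x0 + K = x + K + e * n%:Z by apply/eqz_modP; rewrite xi -st_mod.
have st_x0 : st x0 = st x + e * n%:Z by rewrite !stE x0E g_addMn; ring.
have e_le0 : e <= 0 by rewrite leNgt; apply/negP => e_gt0; nia.
congr ceil_div; apply/eqP; rewrite eq_le st_max ?st_mod -?xi //; last by lia.
by rewrite st_x0 gerDl; nia.
Qed.

Lemma above_wire1_label (lab : nat -> int) (i : nat) :
  above_wire1 n st lab -> (1 <= i <= n)%N -> lab i = (i == 1%N)%:Z + g i%:Z - g 1.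
Proof.
move=> [q [st_q lab_q]] hi.
have g_qK : g (q + K) = g 1.
  by rewrite -(g_addMn 1 (- g (q + K))); congr g; move: st_q; rewrite stE; lia.
have qK : q + K = 1 + (- g 1) * n%:Z by move: st_q; rewrite stE g_qK; lia.
have [i1 | ne_i1] := eqVneq i 1%N.
  subst i; rewrite (chamber_label_window lab_q hi (x := q)) ?st_q ?ceil_div1 ?addrK //.
    by lia.
  by rewrite qK modz_addMn.
set x := q + i%:Z - 1 - n%:Z.
have xK : x + K = i%:Z + (- 1 - g 1) * n%:Z by rewrite /x; lia.
rewrite (chamber_label_window lab_q hi (x := x)) ?xK ?modz_addMn //; last by rewrite /x; lia.
rewrite stE xK g_addMn.
rewrite [X in ceil_div _ X](_ : _ = (i%:Z - n%:Z) + (g i%:Z - g 1) * n%:Z); last by ring.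
by rewrite ceil_divMDr // ceil_div_small /=; [ring | lia].
Qed.

End Chambers.

Lemma traj_rep_rho_shift (n : nat) (v : seq nat) (k : int) (t : nat -> int) :
  (0 < n)%N -> glide n v k -> is_word n v -> traj_rep n (rho_shift n k v) t ->
  exists C, forall i : nat, (1 <= i <= n)%N -> t i = winding n v k i%:Z + C.
Proof.
move=> n_gt0 v_glide v_word [L [Rt [L_lab [R_lab [c tE]]]]].
have idE (x : int) : id x = x + 0 + 0 * n%:Z by rewrite /= mul0r !addr0.
have stE (x : int) :
    lstate n (rho_shift n k v) x = x + k + winding n v k (x + k) * n%:Z.
  by rewrite lstateE phi_rho_shift // (phi_glide n_gt0 v_glide); ring.
have L_E := above_wire1_label n_gt0 (st := id) (g := fun=> 0) idE (fun _ _ => erefl) L_lab.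
have R_E := above_wire1_label n_gt0 stE (@winding_addMn n v k) R_lab.
exists (c - winding n v k 1) => i hi.
by rewrite tE // L_E // R_E //; ring.
Qed.

Lemma weighted_sum_lt0 (R : realDomainType) (I : seq nat) (a x : nat -> R) :
  \sum_(i <- I) x i = 0 -> {in I, forall i, x i != 0} ->
  {in I &, forall i j, 0 < x i -> x j < 0 -> a i <= a j} ->
  ~ {in I &, forall i j, a i = a j} ->
  \sum_(i <- I) a i * x i < 0.
Proof.
move=> sum_x x_neq0 a_mono a_nonconst.
have [j0 j0I xj0] : exists2 j0, j0 \in I & x j0 < 0.
  apply/hasP; apply: contraT => /hasPn x_ge0; exfalso; apply: a_nonconst => i j iI _.
  have : \sum_(i <- I | i \in I) x i == 0 by rewrite -big_seq sum_x.
  rewrite psumr_eq0 => [/allP /(_ i iI) /implyP /(_ iI) xi0 | l lI]; last by rewrite leNgt x_ge0.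
  by move: (x_neq0 i iI); rewrite xi0.
pose theta := \big[Num.min/a j0]_(j <- I | (j \in I) && (x j < 0)) a j.
have theta_sign : {in I, forall i, (a i - theta) * x i <= 0}.
  move=> i iI; have [xi_lt0 | xi_gt0 | ->] := ltrgtP (x i) 0; last by rewrite mulr0.
    have : theta <= a i by apply: ge_bigmin_seq => //; rewrite iI.
    by move=> le_theta; nra.
  have : a i <= theta.
    by apply: le_bigmin => [|j /andP [jI xj]]; apply: a_mono.
  by move=> le_theta; nra.
have [a_theta | ] := altP (@allP _ (fun i => a i == theta) I).
  by case: a_nonconst => i j iI jI; rewrite (eqP (a_theta i iI)) (eqP (a_theta j jI)).
move=> /allPn [i1 i1I ne_theta].
have sum_neq0 : \sum_(i <- I | i \in I) - ((a i - theta) * x i) != 0.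
  rewrite psumr_eq0 => [|i /theta_sign]; last by rewrite oppr_ge0.
  apply/allPn; exists i1 => //.
  by rewrite i1I /= oppr_eq0 mulf_eq0 subr_eq0 negb_or ne_theta x_neq0.
have -> : \sum_(i <- I) a i * x i = \sum_(i <- I | i \in I) (a i - theta) * x i.
  rewrite -big_seq; under eq_bigr => i _ do rewrite mulrBl.
  by rewrite sumrB -mulr_sumr sum_x mulr0 subr0.
rewrite lt_neqAle -oppr_eq0 -sumrN sum_neq0 /=.
by apply: sumr_le0 => i /theta_sign.
Qed.

Section Logarithms.
Variable R : realType.

Lemma ln_prod (I : seq nat) (F : nat -> R) : {in I, forall i, 0 < F i} ->
  ln (\prod_(i <- I) F i) = \sum_(i <- I) ln (F i).
Proof.
move=> F_gt0; rewrite big_seq [RHS]big_seq.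
have := big_morph_in (Num.pos : {pred R}) (@ln R) _ _ (@lnM R) (@ln1 R).
by apply=> [x y||i /F_gt0]; rewrite ?posrE //; exact: mulr_gt0.
Qed.

Lemma ratio_gt0 (al b c : R) : c < b -> al < c \/ b < al -> 0 < (b - al) / (c - al).
Proof.
move=> lt_cb [lt_al | gt_al]; first by apply: divr_gt0; lra.
by rewrite nmulr_rgt0 ?invr_lt0; lra.
Qed.

Lemma ln_ratio_gt0 (al b c : R) : al < c -> c < b -> 0 < ln ((b - al) / (c - al)).
Proof. by move=> lt_al lt_cb; apply: ln_gt0; rewrite ltr_pdivlMr; lra. Qed.

Lemma ln_ratio_lt0 (al b c : R) : c < b -> b < al -> ln ((b - al) / (c - al)) < 0.
Proof.
move=> lt_cb gt_al; apply: ln_lt0; rewrite ratio_gt0 /=; [|lra|lra].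
by rewrite -[b - al]opprB -[c - al]opprB invrN mulrNN ltr_pdivrMr; lra.
Qed.

Lemma sum_ln_ratio (n : nat) (alpha : nat -> R) (b c : R) : c < b ->
  (forall j : nat, (1 <= j <= n)%N -> alpha j < c \/ b < alpha j) ->
  \prod_(1 <= j < n.+1) (b - alpha j) = \prod_(1 <= j < n.+1) (c - alpha j) ->
  \sum_(1 <= i < n.+1) ln ((b - alpha i) / (c - alpha i)) = 0.
Proof.
move=> lt_cb alpha_sep prod_eq.
rewrite -ln_prod => [|i]; last by rewrite mem_index_iota => /alpha_sep /(ratio_gt0 lt_cb).
rewrite prodf_div prod_eq divff ?ln1 // prodf_seq_neq0.
by apply/allP => i; rewrite mem_index_iota => /alpha_sep /= ?; apply/eqP; lra.
Qed.

End Logarithms.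

Theorem proposition8p3 (R : realType) (n : nat) (u v : seq nat) (k2 : int)
    (alpha : nat -> R) (b c : R) (t' : nat -> int) :
  (3 <= n)%N ->
  reduced n u -> (exists k1 : int, glide n u k1) ->
  reduced n v -> (1 <= size v)%N -> glide n v k2 ->
  reduced n (v ++ u) ->
  (forall i j : nat, tri n v u i j -> alpha i < alpha j) ->
  c < b ->
  (forall j : nat, (1 <= j <= n)%N -> alpha j < c \/ b < alpha j) ->
  \prod_(1 <= j < n.+1) (b - alpha j) = \prod_(1 <= j < n.+1) (c - alpha j) ->
  traj_rep n (rho_shift n k2 v) t' ->
  \sum_(1 <= i < n.+1) (t' i)%:~R * ln ((b - alpha i) / (c - alpha i)) < 0.
Proof.
move=> n_ge3 _ _ [v_word _] v_gt0 v_glide _ alpha_tri lt_cb alpha_sep prod_eq t_rep.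
have n_gt1 : (1 < n)%N by lia.
have alpha_cross i j : cross_left n v i j -> alpha i < alpha j.
  by move=> cross; apply: alpha_tri; left.
have [C tE] := traj_rep_rho_shift (ltnW n_gt1) v_glide v_word t_rep.
have sum_x := sum_ln_ratio lt_cb alpha_sep prod_eq.
under eq_big_nat => i /tE -> do rewrite intrD mulrDl.
rewrite big_split /= -mulr_sumr sum_x mulr0 addr0.
apply: weighted_sum_lt0 => // [i | i j | w_const]; rewrite ?mem_index_iota.
- move=> /alpha_sep [lt_al | gt_al].
    exact: lt0r_neq0 (ln_ratio_gt0 lt_al lt_cb).
  exact: ltr0_neq0 (ln_ratio_lt0 lt_cb gt_al).
- move=> hi hj xi_gt0 xj_lt0; rewrite ler_int leNgt; apply/negP.
  move=> /(alpha_lt_of_winding_lt n_gt1 alpha_cross v_glide hi hj).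
  case: (alpha_sep i hi) => [lt_ai | /(ln_ratio_lt0 lt_cb)]; last by lra.
  case: (alpha_sep j hj) => [/ln_ratio_gt0 /(_ lt_cb) | gt_aj]; lra.
- apply: (winding_nonconst n_gt1 alpha_cross v_glide v_word v_gt0) => i j hi hj.
  by apply/eqP; rewrite -(eqr_int R) (w_const i j) ?mem_index_iota.
Qed.
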